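(* Let $\eta>0$ and $\beta\in(1,2]$, and let $\lambda(n)=1-\exp\left[-\left(\frac{n}{\eta}\right)^\beta+\left(\frac{n-1}{\eta}\right)^\beta\right]$ for integers $n\geq 1$ be the hazard function of the Weibull-1 distribution $\mathrm{W}_1(\eta,\beta)$. Then $\lambda$ is a concave function of $n$, i.e. its second-order discrete derivative satisfies $\lambda(n)-2\lambda(n-1)+\lambda(n-2)\leq 0$ for every integer $n\geq 3$.
   Context: The Weibull-1 (Type I discrete Weibull) distribution $\mathrm{W}_1(\eta,\beta)$, with $\eta>0,\beta>0$, is the distribution of a random variable $N$ with values in $\{1,2,\dots\}$ and survival function $S(n)=\mathbb{P}[N>n]=\exp[-(n/\eta)^\beta]$ for integers $n\ge 0$. Its hazard function is $\lambda(n)=\mathbb{P}[N=n\mid N>n-1]$, which equals the formula given in the claim. For a function $\lambda$ on the integers, its second-order discrete derivative at $n$ is $\lambda''(n)=\lambda(n)-2\lambda(n-1)+\lambda(n-2)$, and concavity means this is nonpositive. *)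

From Stdlib Require Import Reals.
Open Scope R_scope.

(* x ^ beta for x >= 0 (real exponent), with the convention 0 ^ beta = 0 (beta > 0). *)
Definition rpow (x b : R) : R := if Rle_dec x 0 then 0 else Rpower x b.

Definition weibull1_hazard (eta beta : R) (n : nat) : R :=
  1 - exp (- rpow (INR n / eta) beta + rpow ((INR n - 1) / eta) beta).

(* With F(t) = (t/eta)^beta the hazard is lambda(n) = 1 - exp(-d_n), where d_n = F(n) - F(n-1).
   By midpoint convexity of exp, e^{-d_n} + e^{-d_{n-2}} >= 2 e^{-(d_n + d_{n-2})/2}, so concavity
   of lambda follows from d_n + d_{n-2} <= 2 d_{n-1}, i.e. from the third finite difference of
   t^beta being nonpositive on [0, oo).  For 1 <= beta <= 2 the derivative beta t^(beta-1) has
   nonincreasing increments, since t^(beta-1) is concave; two applications of the mean value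
   theorem turn this into the required sign of the third difference. *)
From Stdlib Require Import Reals Lra Lia.
From Coquelicot Require Import Coquelicot.
Open Scope R_scope.

Lemma rpow_pos x b : 0 < x -> rpow x b = Rpower x b.
Proof. intros Hx; unfold rpow; destruct (Rle_dec x 0); [lra | easy]. Qed.

Lemma Rpower_1_base y : Rpower 1 y = 1.
Proof. now unfold Rpower; rewrite ln_1, Rmult_0_r, exp_0. Qed.

Lemma Rpower_le_nonpos_exponent q y1 y2 :
  q <= 0 -> 0 < y1 <= y2 -> Rpower y2 q <= Rpower y1 q.
Proof.
  intros Hq Hy.
  replace q with (- - q) by ring; rewrite (Rpower_Ropp y1), (Rpower_Ropp y2).
  apply Rinv_le_contravar; [apply exp_pos|].
  apply Rle_Rpower_l; lra.
Qed.

Lemma continuity_pt_of_is_derive (f : R -> R) x l : is_derive f x l -> continuity_pt f x.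
Proof.
  intros Hf; apply continuity_pt_filterlim, (ex_derive_continuous (V := R_NormedModule)).
  now exists l.
Qed.

Lemma is_derive_shift (f : R -> R) c y l :
  is_derive f (y + c) l -> is_derive (fun t => f (t + c)) y l.
Proof.
  intros Hf.
  assert (Hc : is_derive (fun t => t + c) y 1) by (auto_derive; [easy | ring]).
  assert (H := is_derive_comp f (fun t => t + c) y l 1 Hf Hc).
  change (scal 1 l) with (1 * l) in H; now rewrite Rmult_1_l in H.
Qed.

Lemma is_derive_Rplus (f g : R -> R) x df dg :
  is_derive f x df -> is_derive g x dg -> is_derive (fun t => f t + g t) x (df + dg).
Proof. exact (is_derive_plus f g x df dg). Qed.

Lemma is_derive_Rminus (f g : R -> R) x df dg :
  is_derive f x df -> is_derive g x dg -> is_derive (fun t => f t - g t) x (df - dg).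
Proof. exact (is_derive_minus f g x df dg). Qed.

Lemma is_derive_Rpower q y : 0 < y -> is_derive (fun t => Rpower t q) y (q * Rpower y (q - 1)).
Proof. intros Hy; now apply is_derive_Reals, derivable_pt_lim_power. Qed.

Lemma is_derive_rpow p y : 0 < y -> is_derive (fun t => rpow t p) y (p * Rpower y (p - 1)).
Proof.
  intros Hy; apply is_derive_ext_loc with (f := fun t => Rpower t p);
    [|now apply is_derive_Rpower].
  apply locally_interval with (a := Finite 0) (b := p_infty); try easy.
  intros t Ht _; symmetry; now apply rpow_pos.
Qed.

Lemma continuity_rpow_0 p : 1 <= p -> continuity_pt (fun t => rpow t p) 0.
Proof.
  intros Hp eps Heps; exists (Rmin 1 eps); split; [apply Rmin_pos; lra|].
  intros t [_ Ht]; simpl in *; unfold R_dist in *.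
  assert (H1 := Rmin_l 1 eps); assert (H2 := Rmin_r 1 eps).
  unfold rpow at 2; destruct (Rle_dec 0 0) as [_|]; [|lra].
  rewrite Rminus_0_r in *; unfold rpow; destruct (Rle_dec t 0).
  - now rewrite Rabs_R0.
  - rewrite Rabs_pos_eq in Ht by lra.
    assert (Hle : Rpower t p <= t).
    { replace p with (1 + (p - 1)) by ring.
      rewrite Rpower_plus, Rpower_1 by lra.
      assert (Rpower t (p - 1) <= Rpower 1 (p - 1)) by (apply Rle_Rpower_l; lra).
      rewrite Rpower_1_base in *.
      assert (0 < Rpower t (p - 1)) by apply exp_pos.
      nra. }
    assert (0 < Rpower t p) by apply exp_pos.
    rewrite Rabs_pos_eq; lra.
Qed.

Lemma antitone_of_derive_nonpos (f df : R -> R) a b :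
  a <= b -> (forall t, a <= t <= b -> continuity_pt f t) ->
  (forall t, a < t < b -> is_derive f t (df t)) ->
  (forall t, a < t < b -> df t <= 0) ->
  f b <= f a.
Proof.
  intros Hab Hcont Hd Hneg.
  (* the mean value point may be an endpoint, where df has no sign: clip df at 0 *)
  destruct (MVT_gen f a b (fun t => Rmin 0 (df t))) as [c [_ E]];
    rewrite ?Rmin_left, ?Rmax_right by lra.
  - intros t Ht; rewrite Rmin_right by (apply Hneg; lra); now apply Hd.
  - exact Hcont.
  - assert (Rmin 0 (df c) <= 0) by apply Rmin_l; nra.
Qed.

Lemma Rpower_increment_antitone q h y1 y2 :
  0 <= q <= 1 -> 0 <= h -> 0 < y1 <= y2 ->
  Rpower (y2 + h) q - Rpower y2 q <= Rpower (y1 + h) q - Rpower y1 q.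
Proof.
  intros Hq Hh Hy.
  assert (Hd : forall y, 0 < y -> is_derive (fun t => Rpower (t + h) q - Rpower t q) y
                 (q * Rpower (y + h) (q - 1) - q * Rpower y (q - 1))).
  { intros y Hy0; apply is_derive_Rminus;
      [apply (is_derive_shift (fun s => Rpower s q)) |]; apply is_derive_Rpower; lra. }
  apply (antitone_of_derive_nonpos (fun t => Rpower (t + h) q - Rpower t q)
    (fun y => q * Rpower (y + h) (q - 1) - q * Rpower y (q - 1))); [lra | | |].
  - intros t Ht; eapply continuity_pt_of_is_derive, Hd; lra.
  - intros t Ht; apply Hd; lra.
  - intros t Ht.
    assert (Rpower (t + h) (q - 1) <= Rpower t (q - 1))
      by (apply Rpower_le_nonpos_exponent; lra).
    rewrite <- Rmult_minus_distr_l.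
    apply Rmult_le_0_l; lra.
Qed.

Definition second_difference (f : R -> R) h y := f (y + h + h) - 2 * f (y + h) + f y.

Lemma second_difference_rpow_antitone p h x :
  1 <= p <= 2 -> 0 < h -> 0 <= x ->
  second_difference (fun t => rpow t p) h (x + h) <= second_difference (fun t => rpow t p) h x.
Proof.
  intros Hp Hh Hx.
  set (df := fun y => p * Rpower (y + h + h) (p - 1) - 2 * (p * Rpower (y + h) (p - 1))
                      + p * Rpower y (p - 1)).
  assert (Hshift : forall c y, 0 < y + c ->
            is_derive (fun t => rpow (t + c) p) y (p * Rpower (y + c) (p - 1))).
  { intros c y Hyc; apply (is_derive_shift (fun s => rpow s p)), is_derive_rpow, Hyc. }
  assert (Hd : forall y, 0 < y -> is_derive (second_difference (fun t => rpow t p) h) y (df y)).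
  { intros y Hy; unfold second_difference, df.
    apply is_derive_Rplus; [apply is_derive_Rminus; [| apply is_derive_scal] |].
    - apply (is_derive_shift (fun s => rpow (s + h) p)), Hshift; lra.
    - apply Hshift; lra.
    - apply is_derive_rpow, Hy. }
  apply antitone_of_derive_nonpos with (df := df); [lra | | |].
  - intros t Ht; destruct (Rle_lt_or_eq_dec 0 t) as [Ht0|<-]; [lra | |].
    + eapply continuity_pt_of_is_derive, Hd, Ht0.
    + unfold second_difference.
      apply continuity_pt_plus; [apply continuity_pt_minus |].
      * eapply continuity_pt_of_is_derive,
          (is_derive_shift (fun s => rpow (s + h) p)), Hshift; lra.
      * apply continuity_pt_scal; eapply continuity_pt_of_is_derive, Hshift; lra.
      * apply continuity_rpow_0; lra.
  - intros t Ht; apply Hd; lra.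
  - intros t Ht.
    assert (Rpower (t + h + h) (p - 1) - Rpower (t + h) (p - 1)
              <= Rpower (t + h) (p - 1) - Rpower t (p - 1))
      by (apply Rpower_increment_antitone; lra).
    unfold df; nra.
Qed.

Lemma exp_neg_midpoint_convex u v w :
  u + v <= 2 * w -> 2 * exp (- w) <= exp (- u) + exp (- v).
Proof.
  intros Huvw.
  set (a := exp (- u / 2)); set (b := exp (- v / 2)).
  assert (Ea : exp (- u) = a * a) by (unfold a; rewrite <- exp_plus; f_equal; field).
  assert (Eb : exp (- v) = b * b) by (unfold b; rewrite <- exp_plus; f_equal; field).
  assert (Hw : exp (- w) <= a * b).
  { unfold a, b; rewrite <- exp_plus.
    destruct (Rle_lt_or_eq_dec (- w) (- u / 2 + - v / 2) ltac:(lra)) as [Hlt|Heq].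
    - now left; apply exp_increasing.
    - now rewrite Heq. }
  assert (Hsq : 0 <= (a - b) * (a - b)) by apply Rle_0_sqr.
  rewrite Ea, Eb; lra.
Qed.

Lemma INR_S_div m eta : INR (S m) / eta = INR m / eta + / eta.
Proof. rewrite S_INR; unfold Rdiv; ring. Qed.

Lemma weibull1_hazard_S eta beta m :
  weibull1_hazard eta beta (S m)
  = 1 - exp (- (rpow (INR m / eta + / eta) beta - rpow (INR m / eta) beta)).
Proof.
  unfold weibull1_hazard; rewrite INR_S_div, S_INR.
  replace (INR m + 1 - 1) with (INR m) by ring.
  do 3 f_equal; ring.
Qed.

Theorem proposition1 (eta beta : R) (heta : 0 < eta) (hb1 : 1 < beta) (hb2 : beta <= 2)
  (n : nat) (hn : (3 <= n)%nat) :
  weibull1_hazard eta beta n - 2 * weibull1_hazard eta beta (n - 1)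
    + weibull1_hazard eta beta (n - 2) <= 0.
Proof.
  destruct n as [|[|[|k]]]; [lia.. |].
  replace (S (S (S k)) - 1)%nat with (S (S k)) by lia.
  replace (S (S (S k)) - 2)%nat with (S k) by lia.
  rewrite !weibull1_hazard_S, !INR_S_div.
  assert (Hh : 0 < / eta) by (apply Rinv_0_lt_compat, heta).
  assert (Hx : 0 <= INR k / eta) by (apply Rdiv_le_0_compat; [apply pos_INR | exact heta]).
  assert (Hthird := second_difference_rpow_antitone beta (/ eta) (INR k / eta)
                        ltac:(lra) Hh Hx).
  unfold second_difference in Hthird; cbv beta in Hthird.
  set (a3 := rpow (INR k / eta + / eta + / eta + / eta) beta) in *.
  set (a2 := rpow (INR k / eta + / eta + / eta) beta) in *.
  set (a1 := rpow (INR k / eta + / eta) beta) in *.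
  set (a0 := rpow (INR k / eta) beta) in *.
  assert (Hexp := exp_neg_midpoint_convex (a3 - a2) (a1 - a0) (a2 - a1) ltac:(lra)).
  lra.
Qed.
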